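(* Consider the integer quadratic program: minimize $x^TQx$ subject to $Ax\le b$, $Cx=d$, $x\in\mathbb{Z}^n$. Suppose this program has an optimal solution, all of its optimal solutions are deep, and for every $y_i\in Y$ the row vector $y_i^TQ$ is linearly dependent on the rows of $C$. Then for every optimal solution $x^\star$ and every integer vector $\lambda\in\mathbb{Z}^r$, the vector $x^\star+Y\lambda$ is also an optimal solution.
   Context: Setting: $Q$ is an $n\times n$ integer symmetric matrix, $A$ an $m\times n$ integer matrix, $b\in\mathbb{Z}^m$, $C$ an integer matrix with $n$ columns and linearly independent rows, and $d$ an integer vector. $\Delta$ is the maximum absolute value of the determinant of a square submatrix of $C$. $y_1,\dots,y_r$ is a basis of the nullspace of $C$ consisting of integer vectors with $|y_i|_\infty\le\Delta^2$; $Y$ denotes both the set of these vectors and the $n\times r$ matrix with columns $y_1,\dots,y_r$. A feasible solution is an $x\in\mathbb{Z}^n$ with $Ax\le b$ and $Cx=d$; an optimal solution is a feasible solution minimizing $x^TQx$. A feasible solution $x$ is deep if $x+y_i$ and $x-y_i$ are feasible for all $y_i\in Y$. *)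

From HB Require Import structures.
From mathcomp Require Import all_boot all_order all_algebra.
Set Implicit Arguments. Unset Strict Implicit. Unset Printing Implicit Defensive.
Import Order.TTheory GRing.Theory Num.Theory.
Local Open Scope ring_scope.

Definition toQ (p q : nat) (M : 'M[int]_(p, q)) : 'M[rat]_(p, q) :=
  map_mx (fun z : int => z%:~R) M.

(* Delta = maximum absolute value of the determinant of a (nonempty) square
   submatrix of C. Non-injective row/column selections give determinant 0,
   hence do not affect the maximum. *)
Definition Delta (k n : nat) (C : 'M[int]_(k, n)) : nat :=
  \max_(p < minn k n)
    \max_(f : {ffun 'I_p.+1 -> 'I_k})
      \max_(g : {ffun 'I_p.+1 -> 'I_n})
        `|\det (\matrix_(i, j) C (f i) (g j))|%N.

Definition qobj (n : nat) (Q : 'M[int]_n) (x : 'cV[int]_n) : int :=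
  (x^T *m Q *m x) 0 0.

Definition feasible (m n k : nat) (A : 'M[int]_(m, n)) (b : 'cV[int]_m)
    (C : 'M[int]_(k, n)) (d : 'cV[int]_k) (x : 'cV[int]_n) : Prop :=
  (forall i, (A *m x) i 0 <= b i 0) /\ C *m x = d.

Definition optimal (m n k : nat) (Q : 'M[int]_n) (A : 'M[int]_(m, n))
    (b : 'cV[int]_m) (C : 'M[int]_(k, n)) (d : 'cV[int]_k) (x : 'cV[int]_n) : Prop :=
  feasible A b C d x /\
  forall z, feasible A b C d z -> qobj Q x <= qobj Q z.

Definition deep (m n k r : nat) (A : 'M[int]_(m, n)) (b : 'cV[int]_m)
    (C : 'M[int]_(k, n)) (d : 'cV[int]_k) (Y : 'M[int]_(n, r)) (x : 'cV[int]_n) : Prop :=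
  feasible A b C d x /\
  forall i : 'I_r, feasible A b C d (x + col i Y) /\ feasible A b C d (x - col i Y).

(* Each y_i satisfies C y_i = 0 while y_i^T Q = u^T C for some u, so
   y_i^T Q y_i = u^T C y_i = 0.  For an optimal x, the parallelogram identity
   f(x + y_i) + f(x - y_i) = 2 f(x) + 2 f(y_i) = 2 f(x) together with
   f(x +- y_i) >= f(x) (both points are feasible because x is deep) forces
   f(x +- y_i) = f(x): the optimal set is closed under adding +- y_i, hence
   under adding any integer combination Y lambda. *)
From HB Require Import structures.
From mathcomp Require Import all_boot all_order all_algebra.
From mathcomp Require Import ring zify.
Set Implicit Arguments. Unset Strict Implicit. Unset Printing Implicit Defensive.
Import Order.TTheory GRing.Theory Num.Theory.
Local Open Scope ring_scope.

Lemma mulmx_sum_col (R : comPzRingType) n r (Y : 'M[R]_(n, r)) (lam : 'cV_r) :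
  Y *m lam = \sum_j lam j 0 *: col j Y.
Proof.
apply/matrixP=> i k; rewrite !mxE summxE; apply: eq_bigr=> j _.
by rewrite !mxE (ord1 k) mulrC.
Qed.

Lemma qobjDB n (Q : 'M[int]_n) x y :
  qobj Q (x + y) + qobj Q (x - y) = 2 * qobj Q x + 2 * qobj Q y.
Proof.
by rewrite /qobj !linearD !linearN /= ?mulmxDl ?mulmxDr ?mulmxN ?mulNmx !mxE; ring.
Qed.

Lemma qobj_eq0 n k (Q : 'M[int]_n) (C : 'M[int]_(k, n)) y :
  ((toQ y)^T *m toQ Q <= toQ C)%MS -> toQ C *m toQ y = 0 -> qobj Q y = 0.
Proof.
move=> /submxP [u yQ] Cy.
have : ((toQ y)^T *m toQ Q *m toQ y) 0 0 = 0.
  by rewrite yQ -mulmxA Cy mulmx0 mxE.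
have -> : (toQ y)^T = toQ y^T by rewrite /toQ map_trmx.
by rewrite /toQ -!map_mxM mxE => /eqP; rewrite intr_eq0 => /eqP.
Qed.

Section OptimalShift.

Variables (m n k : nat) (Q : 'M[int]_n) (A : 'M[int]_(m, n)) (b : 'cV[int]_m).
Variables (C : 'M[int]_(k, n)) (d : 'cV[int]_k).

Local Notation optimal := (optimal Q A b C d).
Local Notation feasible := (feasible A b C d).

Lemma optimalDB_qobj0 x y :
  qobj Q y = 0 -> optimal x -> feasible (x + y) -> feasible (x - y) ->
  optimal (x + y) /\ optimal (x - y).
Proof.
move=> y0 [Fx Ox] Fxy Fx_y.
have := Ox _ Fxy; have := Ox _ Fx_y; have := qobjDB Q x y; rewrite y0.
by split; split=> // z /Ox; lia.
Qed.

Lemma optimal_shift_int (y : 'cV[int]_n) :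
  (forall x, optimal x -> optimal (x + y) /\ optimal (x - y)) ->
  forall (z : int) x, optimal x -> optimal (x + z *: y).
Proof.
move=> Oy; elim/int_ind=> [|z IHz|z IHz] x Ox; first by rewrite scale0r addr0.
  by rewrite intS scalerDl scale1r addrCA addrC; apply: (Oy _ (IHz _ Ox)).1.
by rewrite intS opprD scalerDl scaleN1r addrCA addrC; apply: (Oy _ (IHz _ Ox)).2.
Qed.

Lemma optimal_shift_lattice r (Y : 'M[int]_(n, r)) :
  (forall i x, optimal x -> optimal (x + col i Y) /\ optimal (x - col i Y)) ->
  forall x lam, optimal x -> optimal (x + Y *m lam).
Proof.
move=> OY x lam Ox; rewrite mulmx_sum_col.
elim/big_rec: _ => [|j s _ Os]; first by rewrite addr0.
by rewrite addrCA addrC; apply: optimal_shift_int (OY j) _ _ Os.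
Qed.

End OptimalShift.

Theorem corollary1 (n m k r : nat)
  (Q : 'M[int]_n) (A : 'M[int]_(m, n)) (b : 'cV[int]_m)
  (C : 'M[int]_(k, n)) (d : 'cV[int]_k) (Y : 'M[int]_(n, r))
  (* Q symmetric *)
  (HQ : Q^T = Q)
  (* rows of C linearly independent *)
  (HC : row_free (toQ C))
  (* columns of Y form a basis of the nullspace of C *)
  (HYfree : row_free (toQ Y)^T)
  (HYspan : forall v : 'cV[rat]_n,
      toQ C *m v = 0 <-> exists l : 'cV[rat]_r, v = toQ Y *m l)
  (HYbound : forall (i : 'I_n) (j : 'I_r), (`|Y i j| <= ((Delta C) ^ 2)%N%:Z))
  (* the program has an optimal solution *)
  (Hex : exists x, optimal Q A b C d x)
  (* all optimal solutions are deep *)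
  (Hdeep : forall x, optimal Q A b C d x -> deep A b C d Y x)
  (* each y_i^T Q lies in the row space of C *)
  (HYQ : forall i : 'I_r, ((toQ (col i Y))^T *m toQ Q <= toQ C)%MS) :
  forall (xs : 'cV[int]_n) (lam : 'cV[int]_r),
    optimal Q A b C d xs -> optimal Q A b C d (xs + Y *m lam).
Proof.
apply: optimal_shift_lattice => i x Ox.
have Yi0 : qobj Q (col i Y) = 0.
  apply: (qobj_eq0 (HYQ i)); apply/HYspan; exists (delta_mx i 0).
  by rewrite /toQ map_col colE.
have [_ /(_ i) [Fxy Fx_y]] := Hdeep x Ox.
exact: optimalDB_qobj0.
Qed.
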